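(* For any pair of search/learning algorithms $\mathcal{A}_1$, $\mathcal{A}_2$ operating on discrete finite search space $\Omega$, any closed under permutation set of target sets $\tau$, any set of information resources $\mathcal{B}$, and decomposable probability-of-success metric $\phi$, \[ \sum_{t\in\tau}\sum_{f\in\mathcal{B}} \phi_{\mathcal{A}_1}(t,f) = \sum_{t\in\tau}\sum_{f\in\mathcal{B}} \phi_{\mathcal{A}_2}(t,f). \]
   Context: Algorithmic search framework: a finite discrete search space $\Omega$, a nonempty target set $t\subseteq\Omega$ (with target function/indicator vector $\mathbf{t}\in\{0,1\}^{|\Omega|}$), and an external information resource $f$. A black-box iterative algorithm $\mathcal{A}$ produces, at each step, a probability distribution over $\Omega$ from which it samples, using $f$ and the search history. A probability-of-success metric $\phi$ is decomposable if there exists a probability vector $\mathbf{P}_{\phi,f}$ over $\Omega$ (not a function of $t$, conditionally independent of it given $f$) with $\phi(t,f)=\mathbf{t}^{\top}\mathbf{P}_{\phi,f}=P_\phi(X\in t\mid f)$. $\phi_{\mathcal{A}}(t,f)$ denotes the metric for algorithm $\mathcal{A}$. A set of target sets is closed under permutation if it is closed under permutations of the elements of $\Omega$. *)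

From mathcomp Require Import all_boot all_order all_algebra all_fingroup.
Set Implicit Arguments. Unset Strict Implicit. Unset Printing Implicit Defensive.
Import Order.TTheory GRing.Theory Num.Theory.
Local Open Scope ring_scope.

Definition prob_vec (R : numDomainType) (Omega : finType) (p : Omega -> R) : Prop :=
  (forall x, 0 <= p x) /\ \sum_(x : Omega) p x = 1.

(* A probability-of-success metric phi (for a fixed algorithm), as a function
   of the target set t and the information resource f, is decomposable if
   there is, for each f, a probability vector P_{phi,f} over Omega (not
   depending on t) with phi(t,f) = t^T P_{phi,f} = \sum_{x in t} P_{phi,f}(x). *)
Definition decomposable (R : numDomainType) (Omega : finType) (F : Type)
    (phi : {set Omega} -> F -> R) : Prop :=
  exists P : F -> Omega -> R,
    (forall f, prob_vec (P f)) /\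
    (forall (t : {set Omega}) (f : F), phi t f = \sum_(x in t) P f x).

Definition closed_under_perm (Omega : finType) (tau : {set {set Omega}}) : Prop :=
  forall (s : {perm Omega}) (t : {set Omega}), t \in tau -> (s @: t) \in tau.

From mathcomp Require Import all_boot all_order all_algebra all_fingroup.
Import GRing.Theory Num.Theory.
Set Implicit Arguments. Unset Strict Implicit. Unset Printing Implicit Defensive.
Local Open Scope ring_scope.

(* By decomposability, summing phi(t, f) over t in tau gives
   sum_x P_f(x) * #{t in tau | x in t}.  Closure of tau under the
   transposition of x and y shows that this count does not depend on x, so
   the sum is the count times sum_x P_f(x) = 1, whatever the algorithm. *)

Section TargetCount.
Variables (Omega : finType) (tau : {set {set Omega}}).

Definition target_count (x : Omega) : nat := #|[set t in tau | x \in t]|.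

Lemma sum_targets_weighted (V : nmodType) (P : Omega -> V) :
  \sum_(t in tau) \sum_(x in t) P x = \sum_x P x *+ target_count x.
Proof.
under eq_bigr do rewrite big_mkcond.
rewrite exchange_big; apply: eq_bigr => x _.
rewrite -big_mkcondr -sumr_const; apply: eq_bigl => t.
by rewrite inE.
Qed.

Hypothesis tau_closed : closed_under_perm tau.

Lemma target_count_le (x y : Omega) : (target_count x <= target_count y)%N.
Proof.
have swap_inj : injective (fun t : {set Omega} => tperm x y @: t).
  exact/imset_inj/perm_inj.
rewrite /target_count -(card_imset _ swap_inj); apply: subset_leq_card.
apply/subsetP => u /imsetP [t]; rewrite inE => /andP [t_tau xt] ->.
rewrite inE tau_closed //=.
by apply/imsetP; exists x; rewrite ?tpermL.
Qed.

Lemma target_count_const (x y : Omega) : target_count x = target_count y.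
Proof. by apply/eqP; rewrite eqn_leq !target_count_le. Qed.

Lemma sum_targets_prob_vec (R : numDomainType) (P : Omega -> R) (x0 : Omega) :
  prob_vec P -> \sum_(t in tau) \sum_(x in t) P x = (target_count x0)%:R.
Proof.
move=> [_ sumP1]; rewrite sum_targets_weighted.
under eq_bigr do rewrite (target_count_const _ x0) -mulr_natr.
by rewrite -mulr_suml sumP1 mul1r.
Qed.

End TargetCount.

Lemma prob_vec_card_gt0 (R : numDomainType) (Omega : finType) (P : Omega -> R) :
  prob_vec P -> (0 < #|Omega|)%N.
Proof.
move=> [_ sumP1]; rewrite lt0n; apply: contra_neq (oner_neq0 R) => /card0_eq Omega0.
by rewrite -sumP1 big_pred0.
Qed.

Theorem theorem1 (R : realFieldType) (Omega : finType) (F : eqType)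
    (tau : {set {set Omega}}) (B : seq F)
    (phi1 phi2 : {set Omega} -> F -> R) :
  set0 \notin tau ->
  closed_under_perm tau ->
  uniq B ->
  decomposable phi1 ->
  decomposable phi2 ->
  \sum_(t in tau) \sum_(f <- B) phi1 t f = \sum_(t in tau) \sum_(f <- B) phi2 t f.
Proof.
move=> _ tau_closed _ [P1 [P1_prob phi1E]] [P2 [P2_prob phi2E]].
rewrite exchange_big [RHS]exchange_big /=; apply: eq_bigr => f _.
have /card_gt0P [x0 _] := prob_vec_card_gt0 (P1_prob f).
under eq_bigr do rewrite phi1E.
under [RHS]eq_bigr do rewrite phi2E.
by rewrite !(sum_targets_prob_vec tau_closed x0).
Qed.
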